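(* Let $D=\mathrm{diag}(d_1,\dots,d_n)\in\mathbb{D}^n_+$, $W\in\mathbb{R}^{n\times n}$, $u\in\mathbb{R}^n$, $A:=W-D$ with rows $A_i^\top$, and $\mathcal X=\{x\in\mathbb{R}^n: Dx\in[0,1]^n\}$. For $\tau>0$ let $F_\tau(x)=-Dx+[Dx+\tau(Ax+u)]_0^1$, and define $F_\infty:\mathcal X\to\mathbb{R}^n$ componentwise by $$(F_\infty(x))_i=\begin{cases}-d_ix_i, & A_i^\top x+u_i<0,\\ 0, & A_i^\top x+u_i=0,\\ 1-d_ix_i, & A_i^\top x+u_i>0.\end{cases}$$ Then: (i) for each $x\in\mathcal X$, $\lim_{\tau\to+\infty}F_\tau(x)=F_\infty(x)$; (ii) if $\det A\neq0$, then the Filippov regularization of $F_\infty$ satisfies $\operatorname{F}[F_\infty](x)=-Dx+\mathcal H(Ax+u)$ for every $x\in\mathcal X$.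
   Context: $\mathbb{D}^n_+$ is the set of positive diagonal matrices; $[z]_0^1=\max(0,\min(z,1))$ elementwise. The map $h:\mathbb{R}\to 2^{[0,1]}$ is $h(z)=\{0\}$ if $z<0$, $[0,1]$ if $z=0$, $\{1\}$ if $z>0$, and $\mathcal H(x)=h(x_1)\times\cdots\times h(x_n)\subseteq[0,1]^n$. The Filippov regularization of a vector field $X$ is $\operatorname{F}[X](x)=\bigcap_{\delta>0}\bigcap_{\mu(S)=0}\overline{\mathrm{co}}\{X(B(x,\delta)\setminus S)\}$, where $\mu$ is Lebesgue measure, $B(x,\delta)$ the open ball, and $\overline{\mathrm{co}}$ the closed convex hull. *)

From HB Require Import structures.
From mathcomp Require Import all_boot all_order all_algebra.
From mathcomp Require Import all_classical all_reals all_analysis.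
Set Implicit Arguments. Unset Strict Implicit. Unset Printing Implicit Defensive.
Import Order.TTheory GRing.Theory Num.Theory.
Import numFieldNormedType.Exports.
Local Open Scope classical_set_scope.
Local Open Scope ring_scope.

Section Defs.
Variables (R : realType) (n : nat).

Definition eball (x : 'cV[R]_n) (delta : R) : set 'cV[R]_n :=
  [set y | \sum_(i < n) (y i 0 - x i 0) ^+ 2 < delta ^+ 2].

Definition cbox (a b : 'cV[R]_n) : set 'cV[R]_n :=
  [set y | forall i, a i 0 <= y i 0 <= b i 0].

Definition lebesgue_null (S : set 'cV[R]_n) : Prop :=
  forall eps : R, 0 < eps ->
    exists a b : nat -> 'cV[R]_n,
      (forall k i, a k i 0 <= b k i 0) /\
      (S `<=` \bigcup_k cbox (a k) (b k)) /\
      (forall N, \sum_(k < N) \prod_(i < n) (b k i 0 - a k i 0) <= eps).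

Definition conv_hull (S : set 'cV[R]_n) : set 'cV[R]_n :=
  [set z | exists (k : nat) (w : 'I_k -> R) (p : 'I_k -> 'cV[R]_n),
     (forall j, 0 <= w j) /\ \sum_(j < k) w j = 1 /\
     (forall j, S (p j)) /\ z = \sum_(j < k) w j *: p j].

Definition cl_conv_hull (S : set 'cV[R]_n) : set 'cV[R]_n :=
  closure (conv_hull S).

Definition filippov (X : 'cV[R]_n -> 'cV[R]_n) (x : 'cV[R]_n) : set 'cV[R]_n :=
  [set z | forall delta : R, 0 < delta ->
     forall S : set 'cV[R]_n, lebesgue_null S ->
       cl_conv_hull (X @` (eball x delta `\` S)) z].

Definition clamp01 (v : 'cV[R]_n) : 'cV[R]_n :=
  map_mx (fun z => Num.max 0 (Num.min z 1)) v.

Definition hset (z : R) : set R :=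
  [set t | (z < 0 -> t = 0) /\ (z = 0 -> 0 <= t <= 1) /\ (0 < z -> t = 1)].

Definition Hset (x : 'cV[R]_n) : set 'cV[R]_n :=
  [set y | forall i, hset (x i 0) (y i 0)].

Definition Dmat (d : 'I_n -> R) : 'M[R]_n := diag_mx (\row_i d i).

Definition Xdom (d : 'I_n -> R) : set 'cV[R]_n :=
  [set x | forall i, 0 <= (Dmat d *m x) i 0 <= 1].

Definition Ftau (d : 'I_n -> R) (A : 'M[R]_n) (u : 'cV[R]_n) (tau : R)
  (x : 'cV[R]_n) : 'cV[R]_n :=
  - (Dmat d *m x) + clamp01 (Dmat d *m x + tau *: (A *m x + u)).

(* F_infinity, given by its componentwise formula (on all of R^n) *)
Definition Finf (d : 'I_n -> R) (A : 'M[R]_n) (u : 'cV[R]_n)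
  (x : 'cV[R]_n) : 'cV[R]_n :=
  \col_i (let s := (A *m x + u) i 0 in
          if s < 0 then - (d i * x i 0)
          else if s == 0 then 0 else 1 - d i * x i 0).

End Defs.

From HB Require Import structures.
From mathcomp Require Import all_boot all_order all_algebra.
From mathcomp Require Import all_classical all_reals all_analysis.
From mathcomp Require Import ring lra.
Import Order.TTheory GRing.Theory Num.Theory.
Import numFieldNormedType.Exports.
Local Open Scope classical_set_scope.
Local Open Scope ring_scope.

(* (i) Once tau |A_i x + u_i| >= 1, the clamp in the i-th entry of F_tau(x)
   saturates at 0 or 1, and when A_i x + u_i = 0 it is inactive because
   d_i x_i is in [0, 1]; so F_tau(x) is eventually equal to F_inf(x).

   (ii) Near x, every nonzero A_i y + u_i keeps its sign, so the i-th entry of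
   F_inf(y) + D x lies within epsilon of h(A_i x + u_i); closed convex hulls
   preserve such coordinate bounds.  Conversely, as A is invertible, for each
   sign pattern sigma the point x + A^-1 (kappa sigma), and every point of a
   small ball around it, makes A y + u take the sign sigma_i on the
   coordinates where A x + u vanishes and keep the sign of A x + u elsewhere.
   A null set contains no ball, so such a y_sigma can be chosen outside the
   discarded null set, and for t in H(A x + u) the product weights
   prod_i (t_i or 1 - t_i) combine the F_inf(y_sigma) into -D x + t up to
   O(|y_sigma - x|).  That a null set contains no ball is finite
   subadditivity of volume, proved by counting lattice points, after
   compactness has reduced a countable cover of a cube by boxes to a finite
   cover by slightly enlarged boxes. *)

Lemma sum_nat_itv_le {R : realDomainType} (K : nat) (a b : R) : a <= b ->
  \sum_(m < K) ((a <= m%:R) && (m%:R <= b))%:R <= b - a + 1.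
Proof.
move=> ab.
(* The bound is not inductive by itself: when [K] is counted one also needs
   that at most [K - a] of the points below [K] are counted. *)
suff [] : \sum_(m < K) ((a <= m%:R) && (m%:R <= b))%:R <= Num.max 0 (K%:R - a) /\
          \sum_(m < K) ((a <= m%:R) && (m%:R <= b))%:R <= b - a + 1 by [].
elim: K => [|K [IHa IHb]]; first by rewrite big_ord0 le_max lexx; lra.
rewrite big_ord_recr /= -[K.+1%:R]natr1.
have [/andP[aK Kb]|_] := boolP ((a <= K%:R) && (K%:R <= b)); rewrite /=; last first.
  by rewrite addr0; split=> //; apply: le_trans IHa _; rewrite ge_max !le_max lexx /=; lra.
have /max_idPr Ka : 0 <= K%:R - a by lra.
rewrite mulr1n; move: IHa; rewrite Ka => IHa.
by split; [rewrite le_max; apply/orP; right|]; lra.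
Qed.

Lemma prod_seq_addr_le {R : realDomainType} {I : Type} (s : seq I) (L : I -> R) (r : R) :
  (forall i, 0 <= L i) -> 0 <= r <= 1 ->
  \prod_(i <- s) (L i + r) <=
    \prod_(i <- s) L i + r * ((size s)%:R * \prod_(i <- s) (L i + 1)).
Proof.
move=> L0 /andP[r0 r1]; elim: s => [|a s IH]; first by rewrite !big_nil mul0r mulr0 addr0.
rewrite !big_cons /= -natr1.
set P := \prod_(i <- s) L i; set P1 := \prod_(i <- s) (L i + 1).
set m : R := (size s)%:R.
have P0 : 0 <= P by apply: prodr_ge0.
have PP1 : P <= P1 by apply: ler_prod => i _; rewrite L0 /=; lra.
have La := L0 a; have m0 : 0 <= m by [].
apply: le_trans (_ : (L a + r) * (P + r * (m * P1)) <= _); first by rewrite ler_wpM2l //; lra.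
have : r * (m * P1) * r <= r * (m * P1) by rewrite ler_piMr // !mulr_ge0 //; lra.
have : P * r <= P1 * r by apply: ler_wpM2r.
have : 0 <= r * P1 * L a by rewrite !mulr_ge0 //; lra.
nra.
Qed.

Lemma prod_addr_le {R : realDomainType} {I : finType} (L : I -> R) (r : R) :
  (forall i, 0 <= L i) -> 0 <= r <= 1 ->
  \prod_i (L i + r) <= \prod_i L i + r * (#|I|%:R * \prod_i (L i + 1)).
Proof.
by move=> L0 r01; have := prod_seq_addr_le (enum I) L r L0 r01; rewrite -cardT !big_enum.
Qed.

Lemma prod_addr_small {R : realFieldType} {I : finType} (L : I -> R) (eta : R) :
  (forall i, 0 <= L i) -> 0 < eta ->
  exists2 r, 0 < r & \prod_i (L i + r) <= \prod_i L i + eta.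
Proof.
move=> L0 eta0; set C := #|I|%:R * \prod_i (L i + 1).
have C0 : 0 <= C by rewrite mulr_ge0 // prodr_ge0 // => i _; rewrite addr_ge0.
have C1 : 0 < C + 1 by lra.
exists (Num.min 1 (eta / (C + 1))); first by rewrite lt_min ltr01 divr_gt0.
set r := Num.min 1 _.
have r01 : 0 <= r <= 1 by rewrite ge_min lexx le_min ler01 ltW ?divr_gt0.
apply: le_trans (prod_addr_le L r L0 r01) _.
rewrite lerD2l; apply: le_trans (_ : eta / (C + 1) * C <= _).
  by rewrite ler_wpM2r // ge_min lexx orbT.
by rewrite mulrAC ler_pdivrMr //; nra.
Qed.

Lemma sum_halfX {R : numFieldType} (N : nat) :
  \sum_(k < N) (2^-1 : R) ^+ k.+1 = 1 - 2^-1 ^+ N.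
Proof.
elim: N => [|N IH]; first by rewrite big_ord0 expr0 subrr.
by rewrite big_ord_recr /= IH exprS; field.
Qed.

Lemma sum_prod_weights {R : comNzRingType} {I : finType} (t : I -> R) :
  \sum_(f : {ffun I -> bool}) \prod_i (if f i then t i else 1 - t i) = 1.
Proof.
rewrite -(bigA_distr_bigA (fun i (b : bool) => if b then t i else 1 - t i)) /=.
by apply: big1 => i _; rewrite big_bool /= addrC subrK.
Qed.

Lemma sum_prod_weights_bit {R : comNzRingType} {I : finType} (t : I -> R) i :
  \sum_(f : {ffun I -> bool}) (\prod_j (if f j then t j else 1 - t j)) * (f i)%:R = t i.
Proof.
pose G j (b : bool) := (if b then t j else 1 - t j) * (if j == i then b%:R else 1).
have E (f : {ffun I -> bool}) :
    (\prod_j (if f j then t j else 1 - t j)) * (f i)%:R = \prod_j G j (f j).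
  rewrite /G big_split /=; congr (_ * _).
  by rewrite (bigD1 i) //= eqxx big1 ?mulr1 // => j /negbTE ->.
rewrite (eq_bigr _ (fun f _ => E f)) -(bigA_distr_bigA G) /=.
rewrite (bigD1 i) //= [X in _ * X]big1 ?mulr1.
  by rewrite big_bool /G /= eqxx mulr1 mulr0 addr0.
by move=> j /negbTE ji; rewrite big_bool /G /= ji !mulr1 addrC subrK.
Qed.

Section SignSelection.
Context {R : realType}.
Implicit Types (z t k w a tau : R) (b : bool).

Definition hmin z : R := if 0 < z then 1 else 0.
Definition hmax z : R := if z < 0 then 0 else 1.
Definition hpick z b : R := if z == 0 then b%:R else hmin z.

Lemma hsetP z t : hset z t <-> hmin z <= t <= hmax z.
Proof.
rewrite /hset /hmin /hmax /=; case: (ltrgt0P z) => [zp|zn|->].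
- split=> [[_ [_ /(_ isT) ->]]|/andP[t1 t2]]; first by rewrite lexx.
  by split=> //; split=> [z0|_]; [move: zp; rewrite z0 ltxx | lra].
- split=> [[/(_ isT) -> _]|/andP[t1 t2]]; first by rewrite lexx.
  by split=> [_|]; [lra | split=> // z0; move: zn; rewrite z0 ltxx].
- by split=> [[_ [/(_ erefl)]]|t01].
Qed.

Lemma sum_weights_hpick {n} i {s t : 'cV[R]_n} : Hset s t ->
  \sum_(f : {ffun 'I_n -> bool}) (\prod_j (if f j then t j 0 else 1 - t j 0)) *
    hpick (s i 0) (f i) = t i 0.
Proof.
move=> st; rewrite /hpick; case: eqP => [_|/eqP si].
  exact: (sum_prod_weights_bit (fun j => t j 0)).
rewrite -mulr_suml (sum_prod_weights (fun j => t j 0)) mul1r.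
by have /hsetP := st i; rewrite /hmin /hmax; case: ltrgt0P si => // _ _; apply/le_anti.
Qed.

Lemma hpick_perturb b {z k w} : 0 < k -> (z != 0 -> 2 * k <= `|z|) -> `|w| <= k / 2 ->
  let v := z + (if b then k else - k) + w in v != 0 /\ hmin v = hpick z b.
Proof.
move=> k0 zk; rewrite ler_norml /hpick /hmin => /andP[w1 w2] /=.
have [zp|zn|->] := ltrgt0P z.
- have := zk (lt0r_neq0 zp); rewrite gtr0_norm // => kz.
  have vp : 0 < z + (if b then k else - k) + w by case: b; lra.
  by rewrite lt0r_neq0 // vp.
- have := zk (ltr0_neq0 zn); rewrite ltr0_norm // => kz.
  have vn : z + (if b then k else - k) + w < 0 by case: b; lra.
  by rewrite ltr0_neq0 // ltNge (ltW vn).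
- rewrite add0r; case: b => /=.
  + have vp : 0 < k + w by lra.
    by rewrite lt0r_neq0 // vp.
  + have vn : - k + w < 0 by lra.
    by rewrite ltr0_neq0 // ltNge (ltW vn).
Qed.

Lemma clamp01_far a z tau : 0 <= a <= 1 -> 0 <= tau -> (z != 0 -> 1 <= tau * `|z|) ->
  - a + Num.max 0 (Num.min (a + tau * z) 1) =
  if z < 0 then - a else if z == 0 then 0 else 1 - a.
Proof.
move=> /andP[a0 a1] tau0 far; have [zp|zn|->] := ltrgt0P z.
- have := far (lt0r_neq0 zp); rewrite gtr0_norm // => tz.
  by rewrite (min_idPr _) ?(max_idPr _) ?ler01 1?addrC //; lra.
- have := far (ltr0_neq0 zn); rewrite ltr0_norm // => tz.
  by rewrite (min_idPl _) ?(max_idPl _) ?addr0 //; lra.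
- by rewrite mulr0 addr0 (min_idPl _) // (max_idPr _) // addNr.
Qed.

End SignSelection.

Lemma ball_mxP {R : realType} {m n : nat} (x y : 'M[R]_(m, n)) (e : R) :
  ball x e y <-> 0 < e /\ forall i j, `|x i j - y i j| < e.
Proof. by []. Qed.

Lemma trmx_continuous {R : realType} {m n : nat} : continuous (@trmx R m n).
Proof.
move=> v; apply/(@cvg_ballP _ _ _ _ (nbhs_filter v)) => e e0.
apply: filterS (nbhsx_ballx v e e0) => w /ball_mxP[_ vw].
by apply/ball_mxP; split=> // i j; rewrite !mxE.
Qed.

Section NullSets.
Context {R : realType} {n : nat}.
Implicit Types (p a b : 'cV[R]_n) (s : R).

Definition cube p s : set 'cV[R]_n := [set y | forall i, p i 0 <= y i 0 <= p i 0 + s].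

Definition obox a b : set 'cV[R]_n := [set y | forall i, a i 0 < y i 0 < b i 0].

Lemma cube_lattice_count p s (t N : nat) (lo hi : nat -> 'cV[R]_n) :
  0 < s -> (0 < t)%N -> (forall k i, lo k i 0 <= hi k i 0) ->
  cube p s `<=` \bigcup_(k in `I_N) cbox (lo k) (hi k) ->
  t.+1%:R ^+ n <= \sum_(k < N) \prod_i (t%:R / s * (hi k i 0 - lo k i 0) + 1).
Proof.
move=> s0 t0 lohi cover; set M := t%:R / s.
have M0 : 0 < M by rewrite divr_gt0 // ltr0n.
(* [F k i m] tells whether the [m]-th point of the grid of mesh [1/M] along
   the [i]-th edge of the cube lies in the [i]-th side of box [k]. *)
pose F k i (m : 'I_t.+1) : R :=
  ((M * (lo k i 0 - p i 0) <= m%:R) && (m%:R <= M * (hi k i 0 - p i 0)))%:R.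
have F01 k i m : 0 <= F k i m <= 1 by rewrite /F ler0n lern1 leq_b1.
have hit (f : {ffun 'I_n -> 'I_t.+1}) : 1 <= \sum_(k < N) \prod_i F k i (f i).
  have [k /= kN inbox] :
      (\bigcup_(k in `I_N) cbox (lo k) (hi k)) (\col_i (p i 0 + (f i)%:R / M)).
    apply: cover => i; rewrite mxE lerDl divr_ge0 ?(ltW M0) //= lerD2l ler_pdivrMr //.
    by rewrite /M mulrC divfK ?gt_eqF // ler_nat -ltnS.
  rewrite (bigD1 (Ordinal kN)) //= [X in X + _]big1 ?lerDl => [|i _].
    by apply: sumr_ge0 => j _; apply: prodr_ge0 => i _; case/andP: (F01 j i (f i)).
  have /andP[] := inbox i; rewrite mxE /F => lok khi.
  have eM : M * ((f i)%:R / M) = (f i)%:R by rewrite mulrC divfK ?gt_eqF.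
  have lof : M * (lo k i 0 - p i 0) <= (f i)%:R by rewrite -eM ler_pM2l //; lra.
  have fhi : (f i)%:R <= M * (hi k i 0 - p i 0) by rewrite -eM ler_pM2l //; lra.
  by rewrite lof fhi.
have -> : t.+1%:R ^+ n = \sum_(f : {ffun 'I_n -> 'I_t.+1}) (1 : R).
  by rewrite sumr_const card_ffun !card_ord natrX.
apply: le_trans (ler_sum _ (fun f _ => hit f)) _.
rewrite exchange_big /=; apply: ler_sum => k _.
rewrite -(bigA_distr_bigA (F k)) /=; apply: ler_prod => i _.
rewrite sumr_ge0 /=; last by move=> m _; case/andP: (F01 k i m).
have := @sum_nat_itv_le R t.+1 (M * (lo k i 0 - p i 0)) (M * (hi k i 0 - p i 0)).
by rewrite ler_pM2l // lerD2r lohi => /(_ isT); rewrite /F; lra.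
Qed.

Lemma cube_vol_le_cover p s (N : nat) (lo hi : nat -> 'cV[R]_n) :
  0 < s -> (forall k i, lo k i 0 <= hi k i 0) ->
  cube p s `<=` \bigcup_(k in `I_N) cbox (lo k) (hi k) ->
  s ^+ n <= \sum_(k < N) \prod_i (hi k i 0 - lo k i 0).
Proof.
move=> s0 lohi cover; apply/ler_addgt0Pr => e e0.
pose L k i := hi k i 0 - lo k i 0.
have L0 k i : 0 <= L k i by rewrite subr_ge0.
set C := \sum_(k < N) n%:R * \prod_i (L k i + 1).
have C0 : 0 <= C.
  by rewrite sumr_ge0 // => k _; rewrite mulr_ge0 // prodr_ge0 // => i _; rewrite addr_ge0.
pose t := (Num.trunc (s * (C + 1) / e + s)).+1.
have tgt : s * (C + 1) / e + s < t%:R by apply: truncnS_gt.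
have t0 : 0 < t%:R :> R by rewrite ltr0n.
have q0 : 0 <= s * (C + 1) / e by rewrite !mulr_ge0 ?invr_ge0 //; lra.
have st1 : 0 <= s / t%:R <= 1.
  by rewrite divr_ge0 ?(ltW s0) ?(ltW t0) //= ler_pdivrMr // mul1r; lra.
have stC : s / t%:R * C <= e.
  have : s * (C + 1) < t%:R * e by rewrite -ltr_pdivrMr //; lra.
  by rewrite mulrAC ler_pdivrMr //; nra.
have lattice := cube_lattice_count p s t N lo hi s0 isT lohi cover.
have scale k :
    \prod_i (t%:R / s * L k i + 1) = (t%:R / s) ^+ n * \prod_i (L k i + s / t%:R).
  rewrite -[n in _ ^+ n]card_ord -prodr_const -big_split /=; apply: eq_bigr => i _.
  have ts : t%:R / s * (s / t%:R) = 1 by rewrite -invf_div mulVf // gt_eqF // divr_gt0.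
  by rewrite [RHS]mulrDr ts.
have ts0 : 0 < (t%:R / s) ^+ n by rewrite exprn_gt0 // divr_gt0.
apply: le_trans (_ : \sum_(k < N) \prod_i (L k i + s / t%:R) <= _).
  rewrite -(ler_pM2l ts0) mulr_sumr -exprMn divfK ?gt_eqF //.
  apply: le_trans (_ : t.+1%:R ^+ n <= _); first by rewrite lerXn2r ?nnegrE ?ler_nat.
  by apply: le_trans lattice _; rewrite (eq_bigr _ (fun (k : 'I_N) _ => scale k)).
apply: le_trans (_ : \sum_(k < N)
    (\prod_i L k i + s / t%:R * (n%:R * \prod_i (L k i + 1))) <= _).
  by apply: ler_sum => k _; have := prod_addr_le (L k) _ (L0 k) st1; rewrite card_ord.
by rewrite big_split /= -mulr_sumr lerD2l.
Qed.

Lemma compact_cube p s : compact (cube p s).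
Proof.
have := rV_compact (fun i => @segment_compact R (p i 0) (p i 0 + s)).
move/(continuous_compact (continuous_subspaceT trmx_continuous)).
congr compact; apply/seteqP; split => [_ [v vP <-] i | y yP].
  by rewrite mxE; have := vP i; rewrite /= in_itv.
by exists y^T; rewrite ?trmxK // => i /=; rewrite mxE in_itv; apply: yP.
Qed.

Lemma open_obox a b : open (obox a b).
Proof.
rewrite openE => y yab; apply/nbhs_ballP.
pose e := \big[Num.min/1]_i Num.min (y i 0 - a i 0) (b i 0 - y i 0).
have e0 : 0 < e.
  by apply: lt_bigmin => [|i _]; rewrite ?ltr01 // lt_min !subr_gt0; apply: yab.
exists e => // w /ball_mxP[_ yw] i; have := yw i 0; rewrite ltr_norml.
have : e <= Num.min (y i 0 - a i 0) (b i 0 - y i 0) by apply: bigmin_le.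
by rewrite le_min => /andP[? ?] /andP[? ?]; apply/andP; split; lra.
Qed.

Lemma cube_not_null p s : 0 < s -> ~ lebesgue_null (cube p s).
Proof.
move=> s0 null; set eps := s ^+ n / 2.
have eps0 : 0 < eps by rewrite divr_gt0 ?exprn_gt0.
have [a [b [ab [cover small]]]] := null eps eps0.
pose L k i := b k i 0 - a k i 0.
have /choice[rh rhP] : forall k, exists r,
    0 < r /\ \prod_i (L k i + r) <= \prod_i L k i + eps * 2^-1 ^+ k.+1.
  move=> k; have L0 i : 0 <= L k i by rewrite subr_ge0.
  have [|r r0 rP] := prod_addr_small (L k) (eps * 2^-1 ^+ k.+1) L0.
    by rewrite mulr_gt0 ?exprn_gt0.
  by exists r.
pose lo k := \col_i (a k i 0 - rh k / 2); pose hi k := \col_i (b k i 0 + rh k / 2).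
have lohi k i : lo k i 0 <= hi k i 0.
  by rewrite !mxE; have := ab k i; have := (rhP k).1; lra.
have := compact_cube p s; rewrite compact_cover.
move=> /(_ nat setT (fun k => obox (lo k) (hi k))) [k _|y /cover[k _ yk]|D _ coverD].
- exact: open_obox.
- by exists k => // i; rewrite !mxE; have := yk i; have := (rhP k).1; lra.
pose N := (\max_(k <- finmap.enum_fset D) k).+1.
have /(cube_vol_le_cover p s N lo hi s0 lohi) :
    cube p s `<=` \bigcup_(k in `I_N) cbox (lo k) (hi k).
  move=> y /coverD[k kD yk]; exists k; first by rewrite /= ltnS leq_bigmax_seq.
  by move=> i; have /andP[? ?] := yk i; apply/andP; split; apply: ltW.
apply/negP; rewrite -ltNge.
apply: le_lt_trans (_ : \sum_(k < N) (\prod_i L k i + eps * 2^-1 ^+ k.+1) < _).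
  apply: ler_sum => k _; rewrite (eq_bigr (fun i => L k i + rh k)) ?(rhP k).2 // => i _.
  by rewrite !mxE /L; lra.
rewrite big_split /= -mulr_sumr sum_halfX.
have := small N; have : 0 < 2^-1 ^+ N :> R by rewrite exprn_gt0.
have : s ^+ n = eps * 2 by rewrite /eps divfK.
nra.
Qed.

Lemma lebesgue_nullS (E F : set 'cV[R]_n) : E `<=` F -> lebesgue_null F -> lebesgue_null E.
Proof.
move=> EF nullF eps eps0; have [a [b [ab [cover small]]]] := nullF eps eps0.
by exists a, b; split=> //; split=> // y /EF /cover.
Qed.

(* For [n = 0] every box has volume [1] (an empty product), so no set is null. *)
Lemma lebesgue_null0 : (0 < n)%N -> lebesgue_null (set0 : set 'cV[R]_n).
Proof.
move=> n_gt0 eps eps0; exists (fun=> 0), (fun=> 0); split=> [k i|]; first by rewrite lexx.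
split=> // N; rewrite big1 ?ltW // => k _.
by rewrite (bigD1 (Ordinal n_gt0)) //= !mxE subrr mul0r.
Qed.

Lemma lebesgue_null_ball x {S : set 'cV[R]_n} {r : R} :
  lebesgue_null S -> 0 < r -> exists y, ball x r y /\ ~ S y.
Proof.
move=> nullS r0; apply: contrapT => noball.
apply: (cube_not_null (x - const_mx (r / 2)) r r0); apply: lebesgue_nullS nullS.
move=> y yc; apply: contrapT => Sy; apply: noball; exists y; split=> //.
by apply/ball_mxP; split=> // i j; rewrite ord1; have := yc i; rewrite !mxE ltr_norml; lra.
Qed.

End NullSets.

Section Coordinates.
Context {R : realType} {n : nat}.
Implicit Types (P E : set 'cV[R]_n) (x y z c v : 'cV[R]_n).

Lemma eball_coord x y (delta : R) :
  eball x delta y -> 0 < delta -> forall j, `|y j 0 - x j 0| < delta.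
Proof.
rewrite /eball /= => xy delta0 j.
rewrite -(ltr_pXn2r (_ : 0 < 2)%N) ?nnegrE ?normr_ge0 ?(ltW delta0) //.
rewrite real_normK ?num_real //; apply: le_lt_trans xy.
by rewrite (bigD1 j) //= lerDl sumr_ge0 // => i _; rewrite sqr_ge0.
Qed.

Lemma coord_eball {x y} {r delta : R} : 0 < r -> n.+1%:R * r <= delta ->
  (forall j, `|y j 0 - x j 0| < r) -> eball x delta y.
Proof.
move=> r0 rdelta xy; rewrite /eball /=.
apply: le_lt_trans (_ : \sum_(j < n) r ^+ 2 < _).
  apply: ler_sum => j _; rewrite -real_normK ?num_real //.
  by rewrite lerXn2r ?nnegrE ?normr_ge0 ?(ltW r0) // ltW.
have nr0 : 0 <= n.+1%:R * r by rewrite mulr_ge0 ?ltW.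
apply: lt_le_trans (_ : (n.+1%:R * r) ^+ 2 <= _); last first.
  by rewrite lerXn2r ?nnegrE // (le_trans nr0).
rewrite sumr_const card_ord -[r ^+ 2 *+ n]mulr_natl exprMn ltr_pM2r ?exprn_gt0 //.
by rewrite -natrX ltr_nat (leq_trans (ltnSn n)) // expnS expn1 leq_pmulr.
Qed.

Lemma mulmx_entry_le (A : 'M[R]_n) i {v} {e : R} :
  (forall j, `|v j 0| <= e) -> `|(A *m v) i 0| <= (\sum_k \sum_j `|A k j|) * e.
Proof.
move=> ve; have e0 : 0 <= e := le_trans (normr_ge0 _) (ve i).
rewrite mxE; apply: le_trans (ler_norm_sum _ _ _) _.
apply: le_trans (_ : (\sum_j `|A i j|) * e <= _); last first.
  by rewrite ler_wpM2r // [leRHS](bigD1 i) //= lerDl sumr_ge0 // => k _; rewrite sumr_ge0.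
by rewrite mulr_suml ler_sum // => j _; rewrite normrM ler_wpM2l.
Qed.

Lemma closure_cVP E z :
  closure E z <-> forall e, 0 < e -> exists2 c, E c & forall i, `|z i 0 - c i 0| < e.
Proof.
split=> [clE e e0 | approx B /nbhs_ballP[e e0 zeB]].
  have [c [Ec /ball_mxP[_ zc]]] := clE _ (nbhsx_ballx z e e0).
  by exists c => // i; apply: zc.
have [c Ec zc] := approx e e0; exists c; split=> //; apply: zeB.
by apply/ball_mxP; split=> // i j; rewrite ord1.
Qed.

Lemma conv_hull_coord_bound i (lo hi : R) {P c} :
  (forall p, P p -> lo <= p i 0 <= hi) -> conv_hull P c -> lo <= c i 0 <= hi.
Proof.
move=> Pb [k [w [p [w0 [w1 [Pp ->]]]]]].
rewrite summxE (eq_bigr (fun j => w j * p j i 0)) => [|j _]; last by rewrite mxE.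
have [lo_p p_hi] : (forall j, lo <= p j i 0) /\ (forall j, p j i 0 <= hi).
  by split=> j; have /andP[] := Pb _ (Pp j).
rewrite -[lo]mul1r -[hi]mul1r -w1 !mulr_suml.
by rewrite !ler_sum // => j _; rewrite ler_wpM2l.
Qed.

Lemma conv_hull_fin (T : finType) P (w : T -> R) (p : T -> 'cV[R]_n) :
  (forall j, 0 <= w j) -> \sum_j w j = 1 -> (forall j, P (p j)) ->
  conv_hull P (\sum_j w j *: p j).
Proof.
move=> w0 w1 Pp; exists #|T|, (w \o enum_val), (p \o enum_val).
have enumE (V : nmodType) (F : T -> V) : \sum_j F j = \sum_(k < #|T|) F (enum_val k).
  by rewrite -big_enum_val; apply: eq_bigl.
by rewrite -w1 !enumE; do 3?split=> //= j.
Qed.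

End Coordinates.

Section Filippov.
Variables (R : realType) (n : nat) (d : 'I_n -> R) (A : 'M[R]_n) (u : 'cV[R]_n).
Implicit Types (x y w z t : 'cV[R]_n).

Lemma Dmat_mulE x i : (Dmat d *m x) i 0 = d i * x i 0.
Proof. by rewrite mul_diag_mx !mxE. Qed.

Lemma Ftau_entry tau x i : Ftau d A u tau x i 0 =
  - (Dmat d *m x) i 0 + Num.max 0 (Num.min ((Dmat d *m x) i 0 + tau * (A *m x + u) i 0) 1).
Proof. by rewrite /Ftau /clamp01 !mxE. Qed.

Lemma FinfE y i : Finf d A u y i 0 = let s := (A *m y + u) i 0 in
  if s < 0 then - (d i * y i 0) else if s == 0 then 0 else 1 - d i * y i 0.
Proof. by rewrite /Finf mxE. Qed.

Lemma Finf_hmin y i : (A *m y + u) i 0 != 0 ->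
  Finf d A u y i 0 = - (d i * y i 0) + hmin ((A *m y + u) i 0).
Proof. by rewrite FinfE /hmin /=; case: ltrgt0P => // _ _; rewrite ?addr0 // addrC. Qed.

Lemma Ftau_cvg x : Xdom d x -> Ftau d A u tau x @[tau --> +oo] --> Finf d A u x.
Proof.
move=> Xx; apply: cvg_near_cst; set s := A *m x + u.
exists (\sum_i `|s i 0|^-1); split=> [|tau tauT]; first exact: num_real.
have tau0 : 0 <= tau by apply: le_trans (ltW tauT); rewrite sumr_ge0.
apply/matrixP => i j; rewrite ord1 Ftau_entry FinfE /= -/s.
rewrite Dmat_mulE clamp01_far -?Dmat_mulE ?Xx // => s0.
have ns : `|s i 0| != 0 by rewrite normr_eq0.
rewrite -(mulVf ns) ler_wpM2r // (le_trans _ (ltW tauT)) // (bigD1 i) //= lerDl.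
by rewrite sumr_ge0.
Qed.

Lemma Finf_entry_near i {x} {e : R} : Xdom d x -> 0 < e ->
  let s := (A *m x + u) i 0 in exists2 delta, 0 < delta & forall w, eball x delta w ->
  hmin s - e <= Finf d A u w i 0 + d i * x i 0 <= hmax s + e.
Proof.
move=> Xx e0 s; set CA := \sum_k \sum_j `|A k j|.
have CA0 : 0 <= CA by apply: sumr_ge0 => k _; apply: sumr_ge0.
pose m := if s == 0 then e else Num.min e `|s|.
have m0 : 0 < m by rewrite /m; case: eqP => [//|/eqP s0]; rewrite lt_min e0 normr_gt0.
have me : m <= e by rewrite /m; case: eqP; rewrite ?ge_min ?lexx.
have ms : s != 0 -> m <= `|s| by rewrite /m => /negbTE->; rewrite ge_min lexx orbT.
have K0 : 0 < CA + `|d i| + 1 by rewrite ltr_wpDl ?addr_ge0.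
exists (m / (CA + `|d i| + 1)) => [|w /eball_coord wx]; first exact: divr_gt0.
have {}wx j : `|(w - x) j 0| <= m / (CA + `|d i| + 1).
  by rewrite !mxE ltW // wx // divr_gt0.
have Km : (CA + `|d i| + 1) * (m / (CA + `|d i| + 1)) = m by rewrite mulrC divfK ?gt_eqF.
have sw : `|(A *m w + u) i 0 - s| < m.
  rewrite /s (_ : _ - _ = (A *m (w - x)) i 0); last by rewrite mulmxBr !mxE; lra.
  apply: le_lt_trans (mulmx_entry_le A i wx) _.
  rewrite -[X in _ < X]Km ltr_pM2r ?divr_gt0 // -/CA.
  by have := normr_ge0 (d i); lra.
have dw : `|d i * w i 0 - d i * x i 0| < e.
  rewrite -mulrBr normrM; apply: le_lt_trans (_ : `|d i| * (m / (CA + `|d i| + 1)) < _).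
    by apply: ler_wpM2l => //; have := wx i; rewrite !mxE.
  by apply: lt_le_trans me; rewrite -[X in _ < X]Km ltr_pM2r ?divr_gt0 //; lra.
have /andP[dx0 dx1] : 0 <= d i * x i 0 <= 1 by rewrite -Dmat_mulE; apply: Xx.
move: sw dw; rewrite FinfE /= /hmin /hmax !ltr_norml => /andP[sw1 sw2] /andP[dw1 dw2].
have [sp|sn|s0] := ltrgt0P s.
- have := ms (lt0r_neq0 sp); rewrite gtr0_norm // => ms'.
  by have [wp|wn|w0] := ltrgt0P ((A *m w + u) i 0); apply/andP; split; lra.
- have := ms (ltr0_neq0 sn); rewrite ltr0_norm // => ms'.
  by have [wp|wn|w0] := ltrgt0P ((A *m w + u) i 0); apply/andP; split; lra.
- by have [wp|wn|w0] := ltrgt0P ((A *m w + u) i 0); apply/andP; split; lra.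
Qed.

Lemma filippov_Finf_sub x z : Xdom d x ->
  (forall delta, 0 < delta -> cl_conv_hull (Finf d A u @` eball x delta) z) ->
  Hset (A *m x + u) (z + Dmat d *m x).
Proof.
move=> Xx clz i; apply/hsetP; set s := (A *m x + u) i 0.
have -> : (z + Dmat d *m x) i 0 = z i 0 + d i * x i 0 by rewrite -Dmat_mulE !mxE.
suff approx e : 0 < e -> hmin s - e <= z i 0 + d i * x i 0 <= hmax s + e.
  by apply/andP; split; apply/ler_addgt0Pr => e /approx/andP[]; lra.
move=> e0; have e20 : 0 < e / 2 by rewrite divr_gt0.
have [delta delta0 near] := Finf_entry_near i Xx e20.
have /closure_cVP/(_ _ e20)[c cc zc] := clz delta delta0.
have : hmin s - e / 2 - d i * x i 0 <= c i 0 <= hmax s + e / 2 - d i * x i 0.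
  apply: (conv_hull_coord_bound i _ _ _ cc) => _ [w /near /andP[? ?] <-].
  by apply/andP; split; lra.
by move: (zc i); rewrite ltr_norml => /andP[? ?] /andP[? ?]; apply/andP; split; lra.
Qed.

Lemma Finf_hpick x y i b (kap : R) :
  0 < kap -> ((A *m x + u) i 0 != 0 -> 2 * kap <= `|(A *m x + u) i 0|) ->
  `|(A *m (y - x)) i 0 - (if b then kap else - kap)| <= kap / 2 ->
  Finf d A u y i 0 = - (d i * y i 0) + hpick ((A *m x + u) i 0) b.
Proof.
move=> kap0 xk yk; have := hpick_perturb b kap0 xk yk.
rewrite /= (_ : _ + _ + _ = (A *m y + u) i 0) => [[y0 <-]|]; first exact: Finf_hmin.
by rewrite mulmxBr !mxE; lra.
Qed.

Lemma near_preimage_off_null x (v : 'cV[R]_n) {S : set 'cV[R]_n} {r kap : R} :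
  A \in unitmx -> lebesgue_null S -> 0 < kap -> (forall j, `|v j 0| <= kap) ->
  (\sum_k \sum_j `|invmx A k j|) * kap < r ->
  exists y, [/\ ~ S y, forall j, `|y j 0 - x j 0| < r &
    forall i, `|(A *m (y - x)) i 0 - v i 0| <= kap / 2].
Proof.
move=> Au nullS kap0 vk CBr; set CB := \sum_k \sum_j `|invmx A k j| in CBr.
set CA := \sum_k \sum_j `|A k j|.
have CA0 : 0 <= CA by apply: sumr_ge0 => k _; apply: sumr_ge0.
pose rho := Num.min (kap / (2 * (CA + 1))) (r - CB * kap).
have rho0 : 0 < rho by rewrite lt_min divr_gt0 ?subr_gt0 //; lra.
have rhoA : CA * rho <= kap / 2.
  have : rho <= kap / (2 * (CA + 1)) by rewrite ge_min lexx.
  by rewrite ler_pdivlMr; [nra | lra].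
have rhor : rho <= r - CB * kap by rewrite ge_min lexx orbT.
pose y0 := x + invmx A *m v.
have [y [/ball_mxP[_ y0y] Sy]] := lebesgue_null_ball y0 nullS rho0.
have yy0 j : `|(y - y0) j 0| <= rho by move: (y0y j 0); rewrite !mxE distrC => /ltW.
exists y; split=> // [j|i].
  have := mulmx_entry_le (invmx A) j vk; rewrite -/CB => y0x.
  have -> : y j 0 - x j 0 = (y j 0 - y0 j 0) + (invmx A *m v) j 0 by rewrite !mxE; lra.
  by apply: le_lt_trans (ler_normD _ _) _; have := y0y j 0; rewrite distrC; lra.
have Ay0 : A *m (y - y0) = A *m (y - x) - v.
  by rewrite /y0 opprD addrA mulmxBr mulmxA mulmxV // mul1mx.
by move: (le_trans (mulmx_entry_le A i yy0) rhoA); rewrite Ay0 !mxE.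
Qed.

Lemma Finf_sign_pattern x (f : {ffun 'I_n -> bool}) {S : set 'cV[R]_n} {r : R} :
  A \in unitmx -> lebesgue_null S -> 0 < r ->
  exists y, [/\ ~ S y, forall j, `|y j 0 - x j 0| < r &
    forall i, Finf d A u y i 0 = - (d i * y i 0) + hpick ((A *m x + u) i 0) (f i)].
Proof.
move=> Au nullS r0; set s := A *m x + u.
pose m := \big[Num.min/1]_(i | s i 0 != 0) `|s i 0|.
have m0 : 0 < m by apply: lt_bigmin => // i; rewrite normr_gt0.
have ms i : s i 0 != 0 -> m <= `|s i 0| by move=> si; apply: bigmin_le_cond.
set CB := \sum_k \sum_j `|invmx A k j|.
have CB0 : 0 <= CB by apply: sumr_ge0 => k _; apply: sumr_ge0.
pose kap := Num.min (m / 2) (r / (2 * (CB + 1))).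
have kap0 : 0 < kap by rewrite lt_min !divr_gt0 //; lra.
have kapm : 2 * kap <= m.
  suff : kap <= m / 2 by lra.
  by rewrite ge_min lexx.
have kapr : CB * kap < r.
  have : kap <= r / (2 * (CB + 1)) by rewrite ge_min lexx orbT.
  by rewrite ler_pdivlMr; [nra | lra].
pose sig : 'cV[R]_n := \col_i (if f i then kap else - kap).
have sigk j : `|sig j 0| <= kap by rewrite mxE; case: (f j); rewrite ?normrN gtr0_norm.
have [y [Sy yx Ay]] := near_preimage_off_null x sig Au nullS kap0 sigk kapr.
exists y; split=> // i; apply: Finf_hpick kap0 (fun si => le_trans kapm (ms i si)) _.
by move: (Ay i); rewrite /sig [X in _ - X]mxE.
Qed.

Lemma filippov_Finf_sup x t delta (S : set 'cV[R]_n) :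
  A \in unitmx -> Hset (A *m x + u) t -> 0 < delta -> lebesgue_null S ->
  cl_conv_hull (Finf d A u @` (eball x delta `\` S)) (- (Dmat d *m x) + t).
Proof.
move=> Au st delta0 nullS; apply/closure_cVP => e e0.
set Cd := 1 + \sum_k `|d k|.
have Cd0 : 0 < Cd by rewrite ltr_pwDl ?sumr_ge0.
have dCd i : `|d i| < Cd.
  rewrite /Cd (bigD1 i) //=; suff : 0 <= \sum_(k | k != i) `|d k| by lra.
  exact: sumr_ge0.
pose r := Num.min (delta / n.+1%:R) (e / Cd).
have r0 : 0 < r by rewrite lt_min !divr_gt0.
have /choice[y yP] := fun f => Finf_sign_pattern x f Au nullS r0.
pose W (f : {ffun 'I_n -> bool}) := \prod_j (if f j then t j 0 else 1 - t j 0).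
have sW : \sum_f W f = 1 := sum_prod_weights (fun j => t j 0).
have W0 f : 0 <= W f.
  apply: prodr_ge0 => j _; have /hsetP/andP[] := st j; rewrite /hmin /hmax.
  by case: (f j); do 2 case: ifP => _; lra.
exists (\sum_f W f *: Finf d A u (y f)).
  apply: conv_hull_fin => // f; have [Sy yx _] := yP f; exists (y f) => //; split=> //.
  by apply: (coord_eball r0 _ yx); rewrite mulrC -ler_pdivlMr ?ltr0n // ge_min lexx.
move=> i; set c := \sum_f _.
have -> : (- (Dmat d *m x) + t) i 0 = - (d i * x i 0) + t i 0 by rewrite -Dmat_mulE !mxE.
have -> : c i 0 = - \sum_f W f * (d i * y f i 0) + t i 0.
  rewrite summxE -(sum_weights_hpick i st) -sumrN -big_split; apply: eq_bigr => f _.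
  by rewrite mxE; have [_ _ ->] := yP f; rewrite /= mulrDr mulrN.
have -> : - (d i * x i 0) + t i 0 - (- \sum_f W f * (d i * y f i 0) + t i 0) =
    \sum_f W f * (d i * (y f i 0 - x i 0)).
  have -> : \sum_f W f * (d i * (y f i 0 - x i 0)) =
      \sum_f W f * (d i * y f i 0) - (\sum_f W f) * (d i * x i 0).
    by rewrite mulr_suml -sumrB; apply: eq_bigr => f _; ring.
  by rewrite sW mul1r; ring.
apply: le_lt_trans (ler_norm_sum _ _ _) _.
apply: le_lt_trans (_ : \sum_f W f * (`|d i| * r) < _).
  apply: ler_sum => f _; rewrite normrM ger0_norm // ler_wpM2l // normrM ler_wpM2l //.
  by have [_ /(_ i) /ltW] := yP f.
rewrite -mulr_suml sW mul1r (@lt_le_trans _ _ (Cd * r)) ?ltr_pM2r //.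
by rewrite mulrC -ler_pdivlMr // ge_min lexx orbT.
Qed.

End Filippov.

Theorem proposition5 (R : realType) (n : nat) (d : 'I_n -> R)
  (W : 'M[R]_n) (u : 'cV[R]_n) :
  (forall i, 0 < d i) ->
  (forall x, Xdom d x ->
     Ftau d (W - Dmat d) u tau x @[tau --> +oo] --> Finf d (W - Dmat d) u x) /\
  (\det (W - Dmat d) != 0 ->
     forall x, Xdom d x ->
       filippov (Finf d (W - Dmat d) u) x =
       (fun y => - (Dmat d *m x) + y) @` Hset ((W - Dmat d) *m x + u)).
Proof.
move=> _; split=> [x Xx|detA x Xx]; first exact: Ftau_cvg.
have Au : W - Dmat d \in unitmx by rewrite unitmxE unitfE.
apply/seteqP; split=> [z Fz|_ [t st <-] delta delta0 S nullS]; last first.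
  exact: filippov_Finf_sup.
exists (z + Dmat d *m x); last by rewrite addrC addrK.
have [n0|n_gt0] := posnP n; first by move=> [i i_lt]; exfalso; rewrite n0 in i_lt.
apply: filippov_Finf_sub => // delta delta0.
by have := Fz delta delta0 set0 (lebesgue_null0 n_gt0); rewrite setD0.
Qed.
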